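(* Let $\mathcal M,\mathcal N$ be finite polyptych lattices over $F$, let $F\subseteq F'\subseteq\mathbb R$, and let $(\mathcal M,\mathcal N,\mathsf v,\mathsf w)$ be a strict dual $F'$-pair. Then $\mathsf w$ and $\mathsf v$ extend to isomorphisms of $F_{\ge0}$-semialgebras $\mathsf w:S_{\mathcal N_{F'}}\to P_{\mathcal M_{F'}}$ and $\mathsf v:S_{\mathcal M_{F'}}\to P_{\mathcal N_{F'}}$, given by $\mathsf w(\bigoplus_{n\in S}n)=\min_{n\in S}\mathsf w(n)$ (pointwise minimum of functions), $\mathsf w(\infty)=\infty$, and similarly for $\mathsf v$.
   Context: Fix a subring $F$ with $\mathbb Z\subseteq F\subseteq\mathbb R$. A polyptych lattice of rank $r$ over $F$ is a collection $\{M_\alpha\}_{\alpha\in I}$ of free $F$-modules of rank $r$ with piecewise $F$-linear maps (continuous and $F$-linear on each cone of some complete $F$-rational fan) $\mu_{\alpha,\beta}:M_\alpha\to M_\beta$ with $\mu_{\alpha,\alpha}=\mathrm{id}$, $\mu_{\alpha,\beta}=\mu_{\beta,\alpha}^{-1}$, $\mu_{\beta,\gamma}\circ\mu_{\alpha,\beta}=\mu_{\alpha,\gamma}$; finite if $I$ is finite. Elements are classes of $\bigsqcup M_\alpha$ under $m_\alpha\sim\mu_{\alpha,\beta}(m_\alpha)$; $\pi_\alpha$ chart maps; $\mathcal M_{F'}$ has charts $M_\alpha\otimes_FF'$ (extended mutations), e.g. $\mathcal M_{\mathbb R}$. $m+_\alpha m':=\pi_\alpha^{-1}(\pi_\alpha(m)+\pi_\alpha(m'))$,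 $\lambda m:=\pi_\alpha^{-1}(\lambda\pi_\alpha(m))$ ($\lambda\ge 0$). $\Sigma(\mathcal M)$: the coarsest complete fan of cones of $\mathcal M_{\mathbb R}$ (subsets whose chart images are $F$-rational polyhedral cones) on whose chart images all mutations are linear. A point of $\mathcal M_{F'}$ is $p:\mathcal M_{F'}\to F'$ with $p(m)+p(m')=\min_\alpha p(m+_\alpha m')$ and $p(\lambda m)=\lambda p(m)$ ($\lambda\in F'_{\ge0}$); $\mathrm{Sp}_{F'}(\mathcal M)$ is the set of such; $\mathrm{Sp}_{\mathbb R}(\mathcal M,\alpha)$ is the set of $p\in\mathrm{Sp}_{\mathbb R}(\mathcal M)$ linear on chart $\alpha$. Strict dual $F'$-pair: maps $\mathsf v:\mathcal M_{\mathbb R}\to\mathrm{Sp}_{\mathbb R}(\mathcal N)$, $\mathsf w:\mathcal N_{\mathbb R}\to\mathrm{Sp}_{\mathbb R}(\mathcal M)$ with (1) $\mathsf v(\mathcal M_{F'})\subseteq\mathrm{Sp}_{F'}(\mathcal N)$, $\mathsf w(\mathcal N_{F'})\subseteq\mathrm{Sp}_{F'}(\mathcal M)$; (2) $\mathsf v(m)(n)=\mathsf w(n)(m)$ for $m\in\mathcal M_{F'},n\in\mathcal N_{F'}$; (3) these restrictions are bijections; (4) the sets $\mathsf v^{-1}(\mathrm{Sp}_{\mathbb R}(\mathcal N,\gamma))$, $\gamma$ ranging over chart indices of $\mathcal N$, are exactly the maximal-dimensional cones of $\Sigma(\mathcal M)$, and symmetrically for $\mathsf w$. Point-convex hull: $\mathcal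 H_{p,a}=\{m:p(m)\ge a\}$, $\mathrm{p\text{-}conv}_{F'}(S)=\bigcap\{\mathcal H_{p,a}:p\in\mathrm{Sp}_{F'}(\mathcal M),a\in F',S\subseteq\mathcal H_{p,a}\}$. Canonical semialgebra $S_{\mathcal M_{F'}}$: free commutative idempotent semigroup ($\oplus$) on elements of $\mathcal M_{F'}$ modulo $\bigoplus_{S}m=\bigoplus_{S'}m$ when $\mathrm{p\text{-}conv}_{F'}(S)=\mathrm{p\text{-}conv}_{F'}(S')$, plus identity $\infty$, with product $m\star m'=\bigoplus_\alpha(m+_\alpha m')$ extended distributively and $F_{\ge 0}$-action by scaling elements. The point semialgebra $P_{\mathcal M_{F'}}$ is the sub-semialgebra of functions $\mathcal M_{\mathbb R}\to\mathbb R\cup\{\infty\}$ (operations pointwise $\min$ and pointwise $+$, scaling by $F_{\ge0}$) generated by $\mathrm{Sp}_{F'}(\mathcal M)$ (extended to $\mathcal M_{\mathbb R}$), together with $\infty$. *)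

From HB Require Import structures.
From mathcomp Require Import all_boot all_order all_algebra.
From mathcomp Require Import Rstruct.
From Stdlib Require List.
Unset Printing Implicit Defensive.
Import Order.TTheory GRing.Theory Num.Theory.
Local Open Scope ring_scope.

Notation RR := Rdefinitions.R.

Definition is_subring (F : RR -> Prop) : Prop :=
  F 0 /\ F 1 /\ (forall x y, F x -> F y -> F (x - y)) /\
  (forall x y, F x -> F y -> F (x * y)).

Definition Rall : RR -> Prop := fun _ => True.

Definition Fvec (G : RR -> Prop) {r : nat} (x : 'rV[RR]_r) : Prop :=
  forall i, G (x ord0 i).

Definition Fmx (G : RR -> Prop) {r : nat} (A : 'M[RR]_r) : Prop :=
  forall i j, G (A i j).

Definition setE {T : Type} (A B : T -> Prop) : Prop := forall x, A x <-> B x.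

Definition lin {r : nat} (u x : 'rV[RR]_r) : RR := \sum_(i < r) u ord0 i * x ord0 i.

Definition cone_hull {r : nat} (gs : seq ('rV[RR]_r)) : ('rV[RR]_r) -> Prop :=
  fun x => exists c : nat -> RR, (forall i, 0 <= c i) /\
    x = \sum_(i < size gs) c i *: gs`_i.

Definition F_rat_cone (F : RR -> Prop) {r : nat} (K : ('rV[RR]_r) -> Prop) : Prop :=
  exists gs : seq ('rV[RR]_r),
    (forall i, (i < size gs)%N -> Fvec F gs`_i) /\ setE K (cone_hull gs).

Definition face_of {r : nat} (K' K : ('rV[RR]_r) -> Prop) : Prop :=
  exists u : 'rV[RR]_r, (forall x, K x -> 0 <= lin u x) /\
    setE K' (fun x => K x /\ lin u x = 0).

Definition complete_fan (F : RR -> Prop) {r : nat} (S : seq (('rV[RR]_r) -> Prop)) : Prop :=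
  (forall K, List.In K S -> F_rat_cone F K) /\
  (forall K K', List.In K S -> face_of K' K -> exists K'', List.In K'' S /\ setE K'' K') /\
  (forall K1 K2, List.In K1 S -> List.In K2 S ->
     face_of (fun x => K1 x /\ K2 x) K1 /\ face_of (fun x => K1 x /\ K2 x) K2) /\
  (forall x, exists K, List.In K S /\ K x).

(* piecewise F-linear map (given by its R-linear extension on R^r): there is a
   complete F-rational fan on each cone of which f is given by an F-matrix
   (continuity is then automatic). *)
Definition pw_F_linear (F : RR -> Prop) {r : nat} (f : ('rV[RR]_r) -> 'rV[RR]_r) : Prop :=
  exists S, complete_fan F S /\
    forall K, List.In K S -> exists A : 'M[RR]_r, Fmx F A /\ forall x, K x -> f x = x *m A.

(* Each chart M_alpha is identified (via a basis) with F^r ⊆ R^r; mutations are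
   given together with their R-linear extension (the extended mutations).
   The axioms are imposed on the F-points M_alpha = F^r. *)
Record PL (F : RR -> Prop) := {
  pl_rank : nat;
  pl_idx : finType;
  pl_idx0 : pl_idx;
  pl_mu : pl_idx -> pl_idx -> ('rV[RR]_pl_rank) -> 'rV[RR]_pl_rank;
  pl_mu_pw : forall a b, pw_F_linear F (pl_mu a b);
  pl_mu_id : forall a x, Fvec F x -> pl_mu a a x = x;
  pl_mu_inv : forall a b x, Fvec F x -> pl_mu b a (pl_mu a b x) = x;
  pl_mu_comp : forall a b c x, Fvec F x -> pl_mu b c (pl_mu a b x) = pl_mu a c x
}.

Arguments pl_rank {F} p.
Arguments pl_idx {F} p.
Arguments pl_idx0 {F} p.
Arguments pl_mu {F} p _ _ _.

Section PLdefs.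
Context {F : RR -> Prop}.

(* an element of M_R is represented by its family of chart images *)
Definition pt (M : PL F) := pl_idx M -> 'rV[RR]_(pl_rank M).

(* m is an element of M_G (G = F' or R): a coherent family of G-vectors *)
Definition elt (M : PL F) (G : RR -> Prop) (m : pt M) : Prop :=
  (forall a b, m b = pl_mu M a b (m a)) /\ (forall a, Fvec G (m a)).

Definition pinv (M : PL F) (a : pl_idx M) (x : 'rV[RR]_(pl_rank M)) : pt M :=
  fun b => pl_mu M a b x.

Definition addc (M : PL F) (a : pl_idx M) (m m' : pt M) : pt M :=
  pinv M a (m a + m' a).

Definition scale (M : PL F) (l : RR) (m : pt M) : pt M :=
  pinv M (pl_idx0 M) (l *: m (pl_idx0 M)).

Definition minI (M : PL F) (f : pl_idx M -> RR) : RR :=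
  \big[Num.min/f (pl_idx0 M)]_(a : pl_idx M) f a.

(* p is a point of M_G (only its values on M_G matter) *)
Definition is_point (M : PL F) (G : RR -> Prop) (p : pt M -> RR) : Prop :=
  (forall m, elt M G m -> G (p m)) /\
  (forall m m', elt M G m -> elt M G m' ->
     p m + p m' = minI M (fun a => p (addc M a m m'))) /\
  (forall l m, G l -> 0 <= l -> elt M G m -> p (scale M l m) = l * p m).

Definition lin_on_chart (M : PL F) (g : pl_idx M) (p : pt M -> RR) : Prop :=
  exists u, forall x, p (pinv M g x) = lin u x.

Definition chart_img (M : PL F) (a : pl_idx M) (C : pt M -> Prop) :
  ('rV[RR]_(pl_rank M)) -> Prop := fun x => exists m, C m /\ m a = x.

Definition is_Mcone (M : PL F) (C : pt M -> Prop) : Prop :=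
  (forall m, C m -> elt M Rall m) /\ (forall a, F_rat_cone F (chart_img M a C)).

Definition Mface (M : PL F) (C' C : pt M -> Prop) : Prop :=
  (forall m, C' m -> C m) /\ (forall a, face_of (chart_img M a C') (chart_img M a C)).

Definition is_Mfan (M : PL F) (S : seq (pt M -> Prop)) : Prop :=
  (forall C, List.In C S -> is_Mcone M C) /\
  (forall C C', List.In C S -> Mface M C' C -> exists C'', List.In C'' S /\ setE C'' C') /\
  (forall C1 C2, List.In C1 S -> List.In C2 S ->
     Mface M (fun m => C1 m /\ C2 m) C1 /\ Mface M (fun m => C1 m /\ C2 m) C2) /\
  (forall m, elt M Rall m -> exists C, List.In C S /\ C m) /\
  (forall C, List.In C S -> forall a b, exists L : 'M[RR]_(pl_rank M),
     forall x, chart_img M a C x -> pl_mu M a b x = x *m L).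

Definition coarser (M : PL F) (S S' : seq (pt M -> Prop)) : Prop :=
  forall C', List.In C' S' -> exists C, List.In C S /\ forall m, C' m -> C m.

Definition is_Sigma (M : PL F) (S : seq (pt M -> Prop)) : Prop :=
  is_Mfan M S /\ forall S', is_Mfan M S' -> coarser M S S'.

Definition maxdim (M : PL F) (C : pt M -> Prop) : Prop :=
  exists a (B : 'M[RR]_(pl_rank M)), \det B != 0 /\ forall i, chart_img M a C (row i B).

End PLdefs.

Definition half_dual_pair {F : RR -> Prop} (F' : RR -> Prop) (M N : PL F)
  (v : pt M -> pt N -> RR) : Prop :=
  (forall m, elt M Rall m -> is_point N Rall (v m)) /\
  (forall m, elt M F' m -> is_point N F' (v m)) /\
  (* (3) v : M_F' -> Sp_F'(N) is a bijection (points of N_F' compared on N_F') *)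
  (forall m m', elt M F' m -> elt M F' m' ->
     (forall n, elt N F' n -> v m n = v m' n) -> m = m') /\
  (forall p, is_point N F' p ->
     exists m, elt M F' m /\ forall n, elt N F' n -> v m n = p n) /\
  (exists S, is_Sigma M S /\
     (forall g : pl_idx N, exists C, List.In C S /\ maxdim M C /\
         setE C (fun m => elt M Rall m /\ lin_on_chart N g (v m))) /\
     (forall C, List.In C S -> maxdim M C -> exists g : pl_idx N,
         setE C (fun m => elt M Rall m /\ lin_on_chart N g (v m)))).

Definition strict_dual_pair {F : RR -> Prop} (F' : RR -> Prop) (M N : PL F)
  (v : pt M -> pt N -> RR) (w : pt N -> pt M -> RR) : Prop :=
  half_dual_pair F' M N v /\ half_dual_pair F' N M w /\
  (forall m n, elt M F' m -> elt N F' n -> v m n = w n m).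

(* Tropical values R ∪ {∞} (None = ∞)                                  *)

Definition tmin (x y : option RR) : option RR :=
  match x, y with
  | None, _ => y | _, None => x | Some a, Some b => Some (Num.min a b) end.
Definition tadd (x y : option RR) : option RR :=
  match x, y with Some a, Some b => Some (a + b) | _, _ => None end.
Definition tscale (l : RR) (x : option RR) : option RR :=
  match x with Some a => Some (l * a) | None => None end.

(* The canonical semialgebra S_{M_F'} (as a setoid)                    *)
Section Canon.
Context {F : RR -> Prop} (F' : RR -> Prop) (M : PL F).

Definition pconv (s : seq (pt M)) : pt M -> Prop :=
  fun m => elt M F' m /\
    forall (p : pt M -> RR) (a : RR), is_point M F' p -> F' a ->
      (forall x, List.In x s -> a <= p x) -> a <= p m.

(* None = ∞ ; Some s = ⊕_{m ∈ s} m (s a nonempty finite list of elements of M_F') *)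
Definition Scarrier := option (seq (pt M)).

Definition Svalid (x : Scarrier) : Prop :=
  match x with None => True | Some s => s <> [::] /\ forall m, List.In m s -> elt M F' m end.

Definition Seq (x y : Scarrier) : Prop :=
  match x, y with
  | None, None => True
  | Some s, Some s' => setE (pconv s) (pconv s')
  | _, _ => False end.

Definition Soplus (x y : Scarrier) : Scarrier :=
  match x, y with
  | None, _ => y | _, None => x | Some s, Some s' => Some (s ++ s') end.

Definition Sstar (x y : Scarrier) : Scarrier :=
  match x, y with
  | Some s, Some s' =>
      Some (flatten [seq [seq addc M a m m' | a <- enum (pl_idx M)] | m <- s, m' <- s'])
  | _, _ => None end.

Definition Sscale (l : RR) (x : Scarrier) : Scarrier :=
  match x with None => None | Some s => Some [seq scale M l m | m <- s] end.

End Canon.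

Inductive Pgen {F : RR -> Prop} (F' : RR -> Prop) (M : PL F) : (pt M -> option RR) -> Prop :=
| Pg_point (p : pt M -> RR) :
    is_point M Rall p -> is_point M F' p -> Pgen F' M (fun m => Some (p m))
| Pg_inf : Pgen F' M (fun _ => None)
| Pg_min f g : Pgen F' M f -> Pgen F' M g -> Pgen F' M (fun m => tmin (f m) (g m))
| Pg_add f g : Pgen F' M f -> Pgen F' M g -> Pgen F' M (fun m => tadd (f m) (g m))
| Pg_scale (l : RR) f : F l -> 0 <= l -> Pgen F' M f -> Pgen F' M (fun m => tscale l (f m)).

Definition feq {F : RR -> Prop} (M : PL F) (f g : pt M -> option RR) : Prop :=
  forall m, elt M Rall m -> f m = g m.

Definition min_seq (s : seq RR) : RR :=
  match s with [::] => 0 | x :: t => foldr Num.min x t end.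

Definition ext_map {F : RR -> Prop} (M N : PL F) (w : pt N -> pt M -> RR)
  (x : Scarrier N) : pt M -> option RR :=
  match x with
  | None => fun _ => None
  | Some s => fun m => Some (min_seq [seq w n m | n <- s])
  end.

Definition semialg_iso {F : RR -> Prop} (F' : RR -> Prop) (M N : PL F)
  (phi : Scarrier N -> pt M -> option RR) : Prop :=
  (* well defined on classes, and injective *)
  (forall x y, Svalid F' N x -> Svalid F' N y ->
     (Seq F' N x y <-> feq M (phi x) (phi y))) /\
  (forall x, Svalid F' N x -> Pgen F' M (phi x)) /\
  (forall f, Pgen F' M f -> exists x, Svalid F' N x /\ feq M (phi x) f) /\
  (forall x y, Svalid F' N x -> Svalid F' N y ->
     feq M (phi (Soplus N x y)) (fun m => tmin (phi x m) (phi y m))) /\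
  (forall x y, Svalid F' N x -> Svalid F' N y ->
     feq M (phi (Sstar N x y)) (fun m => tadd (phi x m) (phi y m))) /\
  (forall l x, F l -> 0 <= l -> Svalid F' N x ->
     feq M (phi (Sscale N l x)) (fun m => tscale l (phi x m))) /\
  feq M (phi None) (fun _ => None).

From HB Require Import structures.
From mathcomp Require Import all_boot all_order all_algebra.
From mathcomp Require Import Rstruct.
From Stdlib Require Import Classical FunctionalExtensionality.
From mathcomp Require Import lra.
Set Implicit Arguments. Unset Strict Implicit. Unset Printing Implicit Defensive.
Import Order.TTheory GRing.Theory Num.Theory.
Local Open Scope ring_scope.

(* Every function involved -- a point of M_R, a value w(n), a pointwise minimum of
   such -- is Lipschitz in a chart and positively homogeneous, and the rays through integer
   points are dense in M_R; so two such functions agree on M_R as soon as they agree on M_F'.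
   On F'-points w(n)(m) = v(m)(n), so the identities making w a morphism
   (min_a w(n +_a n') = w(n) + w(n') and w(l n) = l w(n)) are the point axioms of v(m), and
   since v : M_F' -> Sp_F'(N) is onto, two finite sets have the same point-convex hull iff
   the minima of their w-values agree on M_F'. Surjectivity onto P_{M_F'} comes from
   w : N_F' -> Sp_F'(M) being onto. Extending the lattice axioms from F-points to real points
   uses continuity of piecewise linear maps, which rests on the closedness of finitely
   generated cones (Caratheodory's reduction to linearly independent generators). *)

Section L1Norm.
Variable r : nat.
Implicit Types x y z : 'rV[RR]_r.

Definition nrm1 x : RR := \sum_(i < r) `|x ord0 i|.

Lemma nrm1_ge0 x : 0 <= nrm1 x.
Proof. by apply: sumr_ge0 => i _; apply: normr_ge0. Qed.

Lemma ler_coord_nrm1 x i : `|x ord0 i| <= nrm1 x.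
Proof. by rewrite /nrm1 (bigD1 i) //= lerDl sumr_ge0. Qed.

Lemma nrm1D x y : nrm1 (x + y) <= nrm1 x + nrm1 y.
Proof.
by rewrite /nrm1 -big_split /=; apply: ler_sum => i _; rewrite mxE ler_normD.
Qed.

Lemma nrm1N x : nrm1 (- x) = nrm1 x.
Proof. by apply: eq_bigr => i _; rewrite mxE normrN. Qed.

Lemma nrm1B x y : nrm1 (x - y) = nrm1 (y - x).
Proof. by rewrite -nrm1N opprB. Qed.

Lemma nrm1_tri x y z : nrm1 (x - z) <= nrm1 (x - y) + nrm1 (y - z).
Proof. by rewrite -[x - z](subrKA y) nrm1D. Qed.

Lemma nrm1_eq0 x : (nrm1 x == 0) = (x == 0).
Proof.
apply/eqP/eqP => [x0|->]; last by rewrite /nrm1 big1 // => i _; rewrite mxE normr0.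
apply/rowP => i; rewrite mxE; apply/normr0_eq0/eqP.
by rewrite eq_le normr_ge0 andbT -x0 ler_coord_nrm1.
Qed.

End L1Norm.

Definition mxabs_sum {m n : nat} (A : 'M[RR]_(m, n)) : RR := \sum_i \sum_j `|A i j|.

Lemma mxabs_sum_ge0 m n (A : 'M[RR]_(m, n)) : 0 <= mxabs_sum A.
Proof. by apply: sumr_ge0 => i _; apply: sumr_ge0 => j _; apply: normr_ge0. Qed.

Lemma nrm1_mulmx m n (x : 'rV[RR]_m) (A : 'M[RR]_(m, n)) :
  nrm1 (x *m A) <= mxabs_sum A * nrm1 x.
Proof.
rewrite /nrm1 /mxabs_sum mulr_suml.
under [X in _ <= X]eq_bigr do rewrite mulr_suml.
rewrite exchange_big /=; apply: ler_sum => j _; rewrite mxE.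
apply: le_trans (ler_norm_sum _ _ _) _; apply: ler_sum => i _.
by rewrite normrM mulrC ler_wpM2l // ler_coord_nrm1.
Qed.

Definition cont_at {r s : nat} (f : 'rV[RR]_r -> 'rV[RR]_s) x : Prop :=
  forall e, 0 < e -> exists2 d, 0 < d & forall y, nrm1 (y - x) < d -> nrm1 (f y - f x) < e.

Lemma cont_at_comp r s t (f : 'rV[RR]_r -> 'rV[RR]_s) (g : 'rV[RR]_s -> 'rV[RR]_t) x :
  cont_at f x -> cont_at g (f x) -> cont_at (g \o f) x.
Proof.
move=> cf cg e e0; have [d1 d10 h1] := cg e e0; have [d2 d20 h2] := cf d1 d10.
by exists d2 => // y /h2 /h1.
Qed.

Lemma cont_at_mulmx m n (A : 'M[RR]_(m, n)) x : cont_at (mulmx^~ A) x.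
Proof.
move=> e e0; have b0 : 0 < mxabs_sum A + 1 by rewrite ltr_wpDl ?mxabs_sum_ge0.
exists (e / (mxabs_sum A + 1)) => [|y hy]; first by rewrite divr_gt0.
rewrite -mulmxBl; apply: le_lt_trans (nrm1_mulmx _ _) _.
apply: le_lt_trans (_ : _ <= (mxabs_sum A + 1) * nrm1 (y - x)) _.
  by rewrite ler_wpM2r ?nrm1_ge0 ?lerDl.
by rewrite mulrC -ltr_pdivlMr.
Qed.

Definition intvec {r : nat} (z : 'rV[RR]_r) : Prop :=
  forall i, exists k : int, z ord0 i = k%:~R.

Lemma lattice_approx r (x : 'rV[RR]_r) d : 0 < d ->
  exists N : nat, exists2 z, intvec z & (0 < N)%N /\ nrm1 (x - N%:R^-1 *: z) < d.
Proof.
move=> d0; set N := (Num.truncn (r%:R / d)).+1.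
have N0 : 0 < N%:R :> RR by rewrite ltr0n.
exists N, (\row_i (Num.floor (N%:R * x ord0 i))%:~R); first by move=> i; rewrite mxE; eexists.
split => //; apply: le_lt_trans (_ : _ <= r%:R / N%:R) _.
  rewrite [leRHS](_ : _ = \sum_(i < r) N%:R^-1); last by rewrite sumr_const card_ord mulr_natl.
  apply: ler_sum => i _.
  rewrite !mxE; set y := N%:R * x ord0 i.
  have -> : x ord0 i = N%:R^-1 * y by rewrite mulKf ?lt0r_neq0.
  rewrite -mulrBr normrM normfV normr_nat ler_piMr ?invr_ge0 ?ler0n //.
  have /andP [hfl hfu] := floor_itv y.
  rewrite intrD in hfu; by rewrite ger0_norm ?subr_ge0 // lerBlDl ltW.
by rewrite ltr_pdivrMr // mulrC -ltr_pdivrMr // truncnS_gt.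
Qed.

Definition pos_hom {r s : nat} (f : 'rV[RR]_r -> 'rV[RR]_s) : Prop :=
  forall a y, 0 < a -> f (a *: y) = a *: f y.

(* The rays through integer vectors are dense. *)
Lemma eq_cont_pos_hom r s (f g : 'rV[RR]_r -> 'rV[RR]_s) x :
  (forall z, intvec z -> f z = g z) -> pos_hom f -> pos_hom g ->
  cont_at f x -> cont_at g x -> f x = g x.
Proof.
move=> fg hf hg cf cg; apply/eqP; rewrite -subr_eq0 -nrm1_eq0 eq_le nrm1_ge0 andbT.
apply/ler_addgt0Pr => e e0; rewrite add0r.
have e20 : 0 < e / 2 by rewrite divr_gt0.
have [d1 d10 h1] := cf _ e20; have [d2 d20 h2] := cg _ e20.
have d0 : 0 < Num.min d1 d2 by rewrite lt_min d10 d20.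
have [N [z hz [N0 hxz]]] := lattice_approx x d0.
set y := N%:R^-1 *: z; rewrite nrm1B lt_min in hxz; case/andP: hxz => hy1 hy2.
have fgy : f y = g y by rewrite /y hf ?hg ?fg ?invr_gt0 ?ltr0n.
apply: le_trans (nrm1_tri _ (f y) _) _; rewrite (nrm1B (f x)) {2}fgy [e]splitr.
by apply: lerD; apply: ltW; [apply: h1 | apply: h2].
Qed.

Lemma mem_In (T : eqType) (x : T) (s : seq T) : x \in s -> List.In x s.
Proof. by elim: s => //= y s ih; rewrite in_cons => /orP [/eqP ->|/ih]; [left | right]. Qed.

Definition closed_set {r : nat} (K : 'rV[RR]_r -> Prop) : Prop :=
  forall x, ~ K x -> exists2 d, 0 < d & forall y, nrm1 (y - x) < d -> ~ K y.

Lemma closed_set_ext r (K K' : 'rV[RR]_r -> Prop) : setE K K' -> closed_set K' -> closed_set K.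
Proof.
move=> KK' cK' x Kx; have [d d0 hd] := cK' x (fun k => Kx (proj2 (KK' x) k)).
by exists d => // y /hd K'y /(proj1 (KK' y)).
Qed.

Lemma common_radius r (T : Type) (s : seq T) (x : 'rV[RR]_r) (Q : T -> 'rV[RR]_r -> Prop) :
  (forall t, List.In t s -> exists2 d, 0 < d & forall y, nrm1 (y - x) < d -> Q t y) ->
  exists2 d, 0 < d & forall t y, List.In t s -> nrm1 (y - x) < d -> Q t y.
Proof.
elim: s => [|t s ih] hs; first by exists 1.
have [d1 d10 h1] := ih (fun t' ht' => hs t' (or_intror ht')).
have [d2 d20 h2] := hs t (or_introl erefl).
exists (Num.min d1 d2) => [|t' y ht']; first by rewrite lt_min d10 d20.
by rewrite lt_min => /andP [y1 y2]; case: ht' => [<-|/h1]; [apply: h2 | apply].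
Qed.

Section Cones.
Variable r : nat.

Definition mxcone {k : nat} (G : 'M[RR]_(k, r)) (y : 'rV[RR]_r) : Prop :=
  exists2 c : 'rV[RR]_k, (forall i, 0 <= c ord0 i) & y = c *m G.

Lemma mxcone_closed_free k (G : 'M[RR]_(k, r)) : row_free G -> closed_set (mxcone G).
Proof.
move=> fG; set L := pinvmx G.
have coneE y : mxcone G y <-> y *m L *m G = y /\ forall i, 0 <= (y *m L) ord0 i.
  split=> [[c c0 ->]|[yLG yL0]]; last by exists (y *m L).
  by rewrite /L mulmxKp // mulmxKpV ?submxMl.
move=> x xNcone.
have [xLG | xLGN] := eqVneq (x *m L *m G) x.
  have [i xLi] : exists i, (x *m L) ord0 i < 0.
    apply: NNPP => hx; apply/xNcone/coneE; split => // i.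
    by rewrite leNgt; apply/negP => ?; apply: hx; exists i.
  have [d d0 hd] : exists2 d, 0 < d & forall y, nrm1 (y - x) < d ->
      nrm1 (y *m L - x *m L) < - (x *m L) ord0 i.
    by apply: cont_at_mulmx; rewrite oppr_gt0.
  exists d => // y /hd yLx /coneE [_ /(_ i)]; apply/negP; rewrite -ltNge.
  have := le_lt_trans (ler_coord_nrm1 _ i) yLx; rewrite !mxE.
  by move/(le_lt_trans (ler_norm _)); rewrite ltrBlDr addNr.
set B := L *m G - 1%:M.
have xB (y : 'rV_r) : y *m B = y *m L *m G - y by rewrite /B mulmxBr mulmx1 mulmxA.
have e0 : 0 < nrm1 (x *m B) by rewrite lt_def nrm1_ge0 andbT nrm1_eq0 xB subr_eq0.
have [d d0 hd] := cont_at_mulmx B x e0.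
exists d => // y /hd yBx /coneE [yLG _].
by move: yBx; rewrite xB yLG subrr sub0r nrm1N ltxx.
Qed.

Lemma mulmx_row' k (G : 'M[RR]_(k, r)) (c : 'rV[RR]_k) j :
  c ord0 j = 0 -> c *m G = col' j c *m row' j G.
Proof.
move=> cj; apply/rowP => l; rewrite !mxE (bigD1_ord j) //= cj mul0r add0r.
by apply: eq_bigr => i _; rewrite !mxE.
Qed.

Lemma mxcone_row' k (G : 'M[RR]_(k, r)) j y : mxcone (row' j G) y -> mxcone G y.
Proof.
case=> c c0 ->; pose c1 := \row_i oapp (c ord0) 0 (unlift j i).
have c1j : c1 ord0 j = 0 by rewrite mxE unlift_none.
exists c1 => [i|]; first by rewrite mxE; case: unlift.
rewrite (mulmx_row' G c1j); congr (_ *m _); apply/rowP => i.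
by rewrite !mxE liftK.
Qed.

Lemma left_kernel_pos k (G : 'M[RR]_(k, r)) : ~~ row_free G ->
  exists2 lam : 'rV[RR]_k, (exists i, 0 < lam ord0 i) & lam *m G = 0.
Proof.
rewrite -kermx_eq0 => /eqP kerG.
have [[i j] /= kij] : exists ij : 'I_k * 'I_k, kermx G ij.1 ij.2 != 0.
  apply: NNPP => hk; apply: kerG; apply/matrixP => i j; rewrite [RHS]mxE.
  by apply/eqP; apply: NNPP => kij; apply: hk; exists (i, j); apply/negP.
have lamG : row i (kermx G) *m G = 0 by rewrite -row_mul mulmx_ker row0.
case: (ltrgtP (kermx G i j) 0) kij => [kneg _|kpos _|//].
  exists (- row i (kermx G)); last by rewrite mulNmx lamG oppr0.
  by exists j; rewrite 2!mxE oppr_gt0.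
by exists (row i (kermx G)) => //; exists j; rewrite mxE.
Qed.

(* Caratheodory: move along a kernel direction until one coefficient vanishes. *)
Lemma mxcone_drop k (G : 'M[RR]_(k, r)) y : ~~ row_free G -> mxcone G y ->
  exists j, mxcone (row' j G) y.
Proof.
move=> /left_kernel_pos [lam [i lami] lamG] [c c0 ->].
have [j lamj jmin] : exists2 j, 0 < lam ord0 j &
    forall i, 0 < lam ord0 i -> c ord0 j / lam ord0 j <= c ord0 i / lam ord0 i.
  have [j lamj jmin] := @arg_minP _ _ _ i (fun i => 0 < lam ord0 i)
    (fun i => c ord0 i / lam ord0 i) lami.
  by exists j.
set t := c ord0 j / lam ord0 j; set c' := c - t *: lam.
have c'j : c' ord0 j = 0 by rewrite !mxE /t mulrVK ?subrr // unitfE gt_eqF.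
exists j, (col' j c') => [l|].
  rewrite !mxE subr_ge0; case: (ltrP 0 (lam ord0 (lift j l))) => lamN.
    by rewrite -ler_pdivlMr // jmin.
  by apply: le_trans (c0 _); rewrite mulr_ge0_le0 // /t divr_ge0 ?c0 ?ltW.
by rewrite -mulmx_row' // mulmxBl -scalemxAl lamG scaler0 subr0.
Qed.

Lemma mxcone_closed k (G : 'M[RR]_(k, r)) : closed_set (mxcone G).
Proof.
elim: k G => [|k ih] G.
  by apply: mxcone_closed_free; rewrite /row_free eqn_leq rank_leq_row.
have [/mxcone_closed_free // | nfG] := boolP (row_free G).
move=> x xNcone.
have [d d0 hd] := @common_radius r _ (enum 'I_k.+1) x (fun j y => ~ mxcone (row' j G) y)
  (fun j _ => ih (row' j G) x (contra_not (@mxcone_row' _ G j x) xNcone)).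
exists d => // y hy /(mxcone_drop nfG) [j].
by apply: hd hy; apply/mem_In; rewrite mem_enum.
Qed.

Definition gen_mx (gs : seq 'rV[RR]_r) : 'M[RR]_(size gs, r) := \matrix_(i < size gs) gs`_i.

Lemma cone_hull_mxcone gs : setE (cone_hull gs) (mxcone (gen_mx gs)).
Proof.
move=> x; split=> [[c [c0 ->]]|[c c0 ->]].
  exists (\row_i c i) => [i|]; first by rewrite mxE.
  by rewrite mulmx_sum_row; apply: eq_bigr => i _; rewrite rowK mxE.
exists (fun n => if insub n is Some i then c ord0 i else 0); split.
  by move=> n; case: insub.
by rewrite mulmx_sum_row; apply: eq_bigr => i _; rewrite rowK valK.
Qed.

Lemma F_rat_cone_closed (F : RR -> Prop) (K : 'rV[RR]_r -> Prop) :
  F_rat_cone F K -> closed_set K.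
Proof.
case=> gs [_ Kgs]; apply: closed_set_ext Kgs _.
by apply: closed_set_ext (cone_hull_mxcone gs) _; apply: mxcone_closed.
Qed.

End Cones.

Section Subring.
Variable G : RR -> Prop.
Hypothesis sG : is_subring G.

Lemma subringD x y : G x -> G y -> G (x + y).
Proof.
have [G0 [_ [GB _]]] := sG; move=> Gx Gy.
rewrite -[y]opprK -[- y]sub0r.
by apply: (GB) => //; apply: (GB).
Qed.

Lemma subring_sum (I : finType) (f : I -> RR) : (forall i, G (f i)) -> G (\sum_i f i).
Proof. by move=> Gf; apply: (big_ind G) => //; [case: sG | apply: subringD]. Qed.

Lemma subring_int (k : int) : G k%:~R.
Proof.
have [G0 [G1 [GB _]]] := sG.
have Gnat n : G n%:R by elim: n => // n ih; rewrite -addn1 natrD; apply: subringD.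
case: k => n; first exact: Gnat.
by rewrite NegzE mulrNz -sub0r; apply: (GB) => //; apply: Gnat.
Qed.

Lemma intvec_Fvec r (z : 'rV[RR]_r) : intvec z -> Fvec G z.
Proof. by move=> hz i; have [k ->] := hz i; apply: subring_int. Qed.

Lemma FvecD r (x y : 'rV[RR]_r) : Fvec G x -> Fvec G y -> Fvec G (x + y).
Proof. by move=> Gx Gy i; rewrite mxE; apply: subringD. Qed.

Lemma FvecZ r l (x : 'rV[RR]_r) : G l -> Fvec G x -> Fvec G (l *: x).
Proof. by case: sG => [_ [_ [_ GM]]] Gl Gx i; rewrite mxE; apply: GM. Qed.

End Subring.

Section PiecewiseLinear.
Variables (F : RR -> Prop) (r : nat) (f : 'rV[RR]_r -> 'rV[RR]_r).
Hypothesis pwf : pw_F_linear F f.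

(* Near x, f is linear on the cones of the fan containing x, and by closedness the other
   cones stay away from x. *)
Lemma pw_linear_cont x : cont_at f x.
Proof.
case: pwf => S [[Srat [_ [_ Scover]]] Slin] e e0.
pose Q (K : 'rV_r -> Prop) y := (K x -> K y -> nrm1 (f y - f x) < e) /\ (~ K x -> ~ K y).
have [d d0 hd] : exists2 d, 0 < d & forall K y, List.In K S -> nrm1 (y - x) < d -> Q K y.
  apply: common_radius => K SK; have [Kx | Kx] := classic (K x).
    have [A [_ fA]] := Slin K SK; have [d d0 hd] := cont_at_mulmx A x e0.
    by exists d => // y hy; split=> // _ Ky; rewrite (fA y) // (fA x) //; apply: hd.
  have [d d0 hd] := F_rat_cone_closed (Srat K SK) Kx.
  by exists d => // y /hd; split.
exists d => // y hy; have [K [SK Ky]] := Scover y.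
have [hin hout] := hd K y SK hy.
by have [Kx | Kx] := classic (K x); [apply: hin | case: (hout Kx)].
Qed.

Lemma pw_linear_nonneg_hom a y : 0 <= a -> f (a *: y) = a *: f y.
Proof.
case: pwf => S [[Srat [_ [_ Scover]]] Slin] a0.
have [K [SK Ky]] := Scover y; have [A [_ fA]] := Slin K SK.
have [gs [_ Kgs]] := Srat K SK.
have Kay : K (a *: y).
  apply/Kgs; have [c [c0 ->]] := proj1 (Kgs y) Ky.
  exists (fun i => a * c i); split=> [i|]; first by rewrite mulr_ge0.
  by rewrite scaler_sumr; apply: eq_bigr => i _; rewrite scalerA.
by rewrite (fA _ Kay) (fA _ Ky) scalemxAl.
Qed.

Lemma pw_linear_Fvec (G : RR -> Prop) x : is_subring G -> (forall y, F y -> G y) ->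
  Fvec G x -> Fvec G (f x).
Proof.
case: pwf => S [[_ [_ [_ Scover]]] Slin] sG FG Gx.
have [K [SK Kx]] := Scover x; have [A [FA fA]] := Slin K SK.
rewrite fA // => j; rewrite mxE; apply: subring_sum => // i.
by case: sG => [_ [_ [_ GM]]]; apply: GM; [apply: Gx | apply/FG/FA].
Qed.

End PiecewiseLinear.

Section ExtendedMutations.
Variable F : RR -> Prop.
Hypothesis sF : is_subring F.
Variable M : PL F.
Local Notation mu := (pl_mu M).
Local Notation a0 := (pl_idx0 M).

Lemma mu_cont a b x : cont_at (mu a b) x.
Proof. exact: pw_linear_cont (pl_mu_pw _ M a b) x. Qed.

Lemma mu_pos_hom a b : pos_hom (mu a b).
Proof. by move=> l y /ltW; apply: (pw_linear_nonneg_hom (pl_mu_pw _ M a b)). Qed.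

(* The axioms of a polyptych lattice only constrain the mutations on F-points; since the
   extended mutations are continuous and homogeneous, they hold on the real charts too. *)
Lemma mu_id_R a x : mu a a x = x.
Proof.
apply: (@eq_cont_pos_hom _ _ _ id).
- by move=> z /(intvec_Fvec sF); apply: pl_mu_id.
- exact: mu_pos_hom.
- by [].
- exact: mu_cont.
- by move=> e e0; exists e.
Qed.

Lemma mu_comp_R a b c x : mu b c (mu a b x) = mu a c x.
Proof.
apply: (@eq_cont_pos_hom _ _ (mu b c \o mu a b)).
- by move=> z /(intvec_Fvec sF); apply: pl_mu_comp.
- by move=> l y l0 /=; rewrite !mu_pos_hom.
- exact: mu_pos_hom.
- by apply: cont_at_comp; apply: mu_cont.
- exact: mu_cont.
Qed.

Lemma pinvK a x : pinv M a x a = x.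
Proof. exact: mu_id_R. Qed.

Lemma elt_Rall (G : RR -> Prop) m : elt M G m -> elt M Rall m.
Proof. by case. Qed.

Lemma pinv_chart (G : RR -> Prop) m a : elt M G m -> pinv M a (m a) = m.
Proof. by case=> coh _; apply: functional_extensionality => b; rewrite /pinv -coh. Qed.

Lemma scale_pinv l x : scale M l (pinv M a0 x) = pinv M a0 (l *: x).
Proof. by rewrite /scale pinvK. Qed.

Lemma addc_pinv x y : addc M a0 (pinv M a0 x) (pinv M a0 y) = pinv M a0 (x + y).
Proof. by rewrite /addc !pinvK. Qed.

Variable G : RR -> Prop.
Hypotheses (sG : is_subring G) (FG : forall y, F y -> G y).

Lemma pinv_elt a x : Fvec G x -> elt M G (pinv M a x).
Proof.
move=> Gx; split=> [b c|b]; first by rewrite /pinv mu_comp_R.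
exact: (pw_linear_Fvec (pl_mu_pw _ M a b) sG FG Gx).
Qed.

Lemma addc_elt a m m' : elt M G m -> elt M G m' -> elt M G (addc M a m m').
Proof. by move=> [_ Gm] [_ Gm']; apply: pinv_elt; apply: FvecD. Qed.

Lemma scale_elt l m : G l -> elt M G m -> elt M G (scale M l m).
Proof. by move=> Gl [_ Gm]; apply: pinv_elt; apply: FvecZ. Qed.

End ExtendedMutations.

Lemma pinv_eltR (F : RR -> Prop) (sF : is_subring F) (M : PL F) a x : elt M Rall (pinv M a x).
Proof. by apply: pinv_elt. Qed.

Lemma ler_dist_min (a b c d : RR) : `|Num.min a b - Num.min c d| <= `|a - c| + `|b - d|.
Proof.
have key (x y z t : RR) : Num.min x y - Num.min z t <= `|x - z| + `|y - t|.
  have := ler_norm (x - z); have := ler_norm (y - t).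
  have := ler_norm (z - x); have := ler_norm (t - y); rewrite !(distrC z) !(distrC t).
  by rewrite !minElt; case: ltP => ?; case: ltP => ? /=; lra.
by rewrite ler_norml key lerNl opprB (distrC a) (distrC b) key.
Qed.

Section RegularFunctions.
Variable F : RR -> Prop.
Hypothesis sF : is_subring F.
Variable M : PL F.
Local Notation a0 := (pl_idx0 M).
Implicit Types f g : pt M -> RR.

Definition regular f : Prop :=
  (exists2 C, 0 <= C & forall m m', elt M Rall m -> elt M Rall m' ->
      `|f m - f m'| <= C * nrm1 (m a0 - m' a0)) /\
  (forall l m, 0 < l -> elt M Rall m -> f (scale M l m) = l * f m).

Lemma regularD f g : regular f -> regular g -> regular (fun m => f m + g m).
Proof.
move=> [[C1 C10 Lf] Hf] [[C2 C20 Lg] Hg].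
split=> [|l m l0 Em]; last by rewrite Hf // Hg // mulrDr.
exists (C1 + C2) => [|m m' Em Em']; first exact: addr_ge0.
rewrite opprD addrACA mulrDl; apply: le_trans (ler_normD _ _) _.
by apply: lerD; [apply: Lf | apply: Lg].
Qed.

Lemma regular_min f g : regular f -> regular g -> regular (fun m => Num.min (f m) (g m)).
Proof.
move=> [[C1 C10 Lf] Hf] [[C2 C20 Lg] Hg].
split=> [|l m l0 Em]; last by rewrite Hf // Hg // minr_pMr // ltW.
exists (C1 + C2) => [|m m' Em Em']; first exact: addr_ge0.
apply: le_trans (ler_dist_min _ _ _ _) _; rewrite mulrDl.
by apply: lerD; [apply: Lf | apply: Lg].
Qed.

Lemma regularZ c f : regular f -> regular (fun m => c * f m).
Proof.
move=> [[C C0 Lf] Hf]; split=> [|l m l0 Em]; last by rewrite Hf // mulrCA.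
exists (`|c| * C) => [|m m' Em Em']; first by rewrite mulr_ge0.
by rewrite -mulrBr normrM -mulrA ler_wpM2l // Lf.
Qed.

Section Point.
Variable p : pt M -> RR.
Hypothesis pR : is_point M Rall p.

Lemma point_superadd x y : p (pinv M a0 x) + p (pinv M a0 y) <= p (pinv M a0 (x + y)).
Proof.
case: pR => _ [padd _]; rewrite (padd _ _ (pinv_eltR sF _ _) (pinv_eltR sF _ _)).
by rewrite -[pinv M a0 (x + y)](addc_pinv sF) bigmin_le.
Qed.

Lemma point_scale l x : 0 <= l -> p (pinv M a0 (l *: x)) = l * p (pinv M a0 x).
Proof.
case: pR => _ [_ pscale] l0.
by rewrite -[pinv M a0 _](scale_pinv sF) (pscale l _ I l0 (pinv_eltR sF _ _)).
Qed.

(* Superadditivity bounds p from below by its values at the vectors +-e_i. *)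
Lemma point_lower_bound :
  exists2 C, 0 <= C & forall x, - (C * nrm1 x) <= p (pinv M a0 x).
Proof.
pose K i := `|p (pinv M a0 'e_i)| + `|p (pinv M a0 (- 'e_i))|.
have K0 i : 0 <= K i by rewrite addr_ge0.
exists (\sum_i K i) => [|x]; first exact: sumr_ge0.
have coord i : - (K i * nrm1 x) <= p (pinv M a0 (x ord0 i *: 'e_i)).
  apply: le_trans (_ : - (K i * `|x ord0 i|) <= _).
    by rewrite lerN2 ler_wpM2l // ler_coord_nrm1.
  set pe := p (pinv M a0 'e_i); set pe' := p (pinv M a0 (- 'e_i)).
  have Kpe : - K i <= pe.
    by have := ler_norm (- pe); have := normr_ge0 pe'; rewrite normrN /K; lra.
  have Kpe' : - K i <= pe'.
    by have := ler_norm (- pe'); have := normr_ge0 pe; rewrite normrN /K; lra.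
  case: (lerP 0 (x ord0 i)) => xi.
    by rewrite point_scale // ger0_norm // -mulNr mulrC ler_wpM2l.
  rewrite -[x ord0 i]opprK scaleNr -scalerN point_scale; last by rewrite oppr_ge0 ltW.
  by rewrite opprK ltr0_norm // -mulNr mulrC ler_wpM2l // oppr_ge0 ltW.
rewrite {2}(row_sum_delta x) mulr_suml -sumrN.
apply: (big_ind2 (fun s y => s <= p (pinv M a0 y))) => [|s1 s2 y1 y2 h1 h2|i _].
- by rewrite -(scale0r 0) point_scale // mul0r.
- by apply: le_trans (point_superadd _ _); apply: lerD.
- exact: coord.
Qed.

Lemma point_regular : regular p.
Proof.
split=> [|l m l0 Em]; last by case: pR => _ [_ ->] //; apply: ltW.
have [C C0 pC] := point_lower_bound.
have half m m' : elt M Rall m -> elt M Rall m' -> p m - p m' <= C * nrm1 (m a0 - m' a0).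
  move=> Em Em'; rewrite -(pinv_chart a0 Em) -(pinv_chart a0 Em') !(pinvK sF).
  have := point_superadd (m a0) (m' a0 - m a0); rewrite (addrC (m a0)) subrK.
  by have := pC (m' a0 - m a0); rewrite nrm1B; lra.
exists C => // m m' Em Em'; rewrite ler_norml half // andbT lerNl opprB nrm1B.
exact: half.
Qed.

End Point.

Lemma regular_eq (G : RR -> Prop) f g : is_subring G -> (forall y, F y -> G y) ->
  regular f -> regular g -> (forall m, elt M G m -> f m = g m) ->
  forall m, elt M Rall m -> f m = g m.
Proof.
move=> sG FG [[C1 C10 Lf] Hf] [[C2 C20 Lg] Hg] fg m Em.
apply/eqP; rewrite -subr_eq0 -normr_eq0 eq_le normr_ge0 andbT.
apply/ler_addgt0Pr => e e0; rewrite add0r.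
have C0 : 0 < C1 + C2 + 1 by rewrite ltr_wpDl // addr_ge0.
have [N [z Zz [N0 hz]]] := lattice_approx (m a0) (divr_gt0 e0 C0).
have N0' : 0 < N%:R^-1 :> RR by rewrite invr_gt0 ltr0n.
have Ez : elt M G (pinv M a0 z) by apply: pinv_elt => //; apply: intvec_Fvec.
set q := scale M N%:R^-1 (pinv M a0 z).
have Eq : elt M Rall q by apply: (scale_elt sF) => //; apply: elt_Rall Ez.
have fgq : f q = g q by rewrite /q Hf ?Hg ?fg //; apply: elt_Rall Ez.
have mq : nrm1 (m a0 - q a0) < e / (C1 + C2 + 1) by rewrite /q (scale_pinv sF) (pinvK sF).
apply: le_trans (_ : `|f m - f q| + `|g q - g m| <= _).
  by rewrite fgq -[f m - g m](subrKA (g q)) ler_normD.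
apply: le_trans (_ : (C1 + C2) * nrm1 (m a0 - q a0) <= _).
  by rewrite mulrDl lerD ?Lf // (nrm1B (m a0)) Lg.
rewrite ltr_pdivlMr // in mq; apply: ltW; apply: le_lt_trans mq.
by rewrite mulrC ler_wpM2l ?nrm1_ge0 // ?lerDl.
Qed.

End RegularFunctions.

Lemma In_cat (A : Type) (s s' : seq A) x : List.In x (s ++ s') <-> List.In x s \/ List.In x s'.
Proof. exact: List.in_app_iff. Qed.

Lemma In_map_iff (A B : Type) (f : A -> B) (s : seq A) y :
  List.In y (map f s) <-> exists x, f x = y /\ List.In x s.
Proof. exact: List.in_map_iff. Qed.

Lemma In_map (A B : Type) (f : A -> B) (s : seq A) x : List.In x s -> List.In (f x) (map f s).
Proof. exact: List.in_map. Qed.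

Lemma In_flatten (A : Type) (L : seq (seq A)) z :
  List.In z (flatten L) <-> exists l, List.In l L /\ List.In z l.
Proof. exact: List.in_concat. Qed.

Lemma In_allpairs (A B C : Type) (G : A -> B -> C) s s' z :
  List.In z [seq G x y | x <- s, y <- s'] <->
  exists x y, [/\ List.In x s, List.In y s' & z = G x y].
Proof.
rewrite In_flatten; split=> [[l [/In_map_iff [x [<- sx]] /In_map_iff [y [<- s'y]]]]|].
  by exists x, y.
by case=> x [y [sx s'y ->]]; exists (map (G x) s'); split; apply: In_map.
Qed.

Lemma In_enum (I : finType) (i : I) : List.In i (enum I).
Proof. by apply: mem_In; rewrite mem_enum. Qed.

Lemma min_seq_le (l : seq RR) z : List.In z l -> min_seq l <= z.
Proof.
case: l => // x t; elim: t => [|y t ih] /=; first by case=> // ->.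
case=> [zx|[zy|zt]]; rewrite ge_min.
- by rewrite ih ?orbT //; left.
- by rewrite zy lexx.
- by rewrite ih ?orbT //; right.
Qed.

Lemma min_seq_in (l : seq RR) : l <> [::] -> List.In (min_seq l) l.
Proof.
case: l => // x t _; elim: t => [|y t ih] /=; first by left.
by case: leP => _; [right; left | case: ih; [left | right; right]].
Qed.

Lemma min_seq_eq (l : seq RR) y : List.In y l -> (forall z, List.In z l -> y <= z) ->
  min_seq l = y.
Proof.
move=> ly ymin; apply/eqP; rewrite eq_le min_seq_le // ymin //.
by apply: min_seq_in; case: (l) ly.
Qed.

Lemma min_seq_cat (s s' : seq RR) : s <> [::] -> s' <> [::] ->
  min_seq (s ++ s') = Num.min (min_seq s) (min_seq s').
Proof.
move=> s0 s'0; apply: min_seq_eq => [|z /In_cat [sz|s'z]].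
- by case: leP => _; apply/In_cat; [left | right]; apply: min_seq_in.
- by rewrite ge_min min_seq_le.
- by rewrite ge_min (min_seq_le s'z) orbT.
Qed.

Lemma min_seq_scale (l : seq RR) c : 0 <= c ->
  min_seq [seq c * x | x <- l] = c * min_seq l.
Proof.
case: l => [|x t] c0; first by rewrite mulr0.
apply: min_seq_eq => [|_ /In_map_iff [y [<- ly]]]; first by apply/In_map/min_seq_in.
by rewrite ler_wpM2l // min_seq_le.
Qed.

Lemma minI_attained (F : RR -> Prop) (N : PL F) (g : pl_idx N -> RR) :
  exists2 a, minI N g = g a & forall b, g a <= g b.
Proof.
have [a _ amin] := @arg_minP _ _ _ (pl_idx0 N) xpredT g isT.
exists a => [|b]; last exact: amin.
by apply/eqP; rewrite eq_le bigmin_le; apply: le_bigmin => [|b _]; apply: amin.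
Qed.

Lemma minI_seq (F : RR -> Prop) (N : PL F) (g : pl_idx N -> RR) :
  min_seq (map g (enum (pl_idx N))) = minI N g.
Proof.
have [a -> amin] := minI_attained g.
by apply: min_seq_eq => [|_ /In_map_iff [b [<- _]]]; [apply/In_map/In_enum | apply: amin].
Qed.

Lemma regular_min_seq (F : RR -> Prop) (M : PL F) (A : Type) (h : A -> pt M -> RR) s :
  (forall a, List.In a s -> regular (h a)) ->
  regular (fun m => min_seq [seq h a m | a <- s]).
Proof.
case: s => [_|a0 t].
  split=> [|l m l0 _]; last by rewrite mulr0.
  by exists 0 => // m m' _ _; rewrite subrr normr0 mul0r.
elim: t a0 => [|a1 t ih] a0 hs /=; first by apply: hs; left.
apply: regular_min; first by apply: hs; right; left.
by apply: ih => a [<-|ta]; apply: hs; [left | right; right].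
Qed.

Section DualPair.
Variables F F' : RR -> Prop.
Hypotheses (sF : is_subring F) (sF' : is_subring F') (FF' : forall x, F x -> F' x).
Variables (M N : PL F) (v : pt M -> pt N -> RR) (w : pt N -> pt M -> RR).
Hypotheses (hv : half_dual_pair F' M N v) (hw : half_dual_pair F' N M w).
Hypothesis vw : forall m n, elt M F' m -> elt N F' n -> v m n = w n m.

Let w_point : forall n, elt N Rall n -> is_point M Rall (w n).
Proof. by case: hw. Qed.
Let w_pointF : forall n, elt N F' n -> is_point M F' (w n).
Proof. by case: hw => _ []. Qed.
Let w_onto : forall p, is_point M F' p ->
  exists n, elt N F' n /\ forall m, elt M F' m -> w n m = p m.
Proof. by case: hw => _ [_ [_ []]]. Qed.
Let v_pointF : forall m, elt M F' m -> is_point N F' (v m).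
Proof. by case: hv => _ []. Qed.
Let v_onto : forall p, is_point N F' p ->
  exists m, elt M F' m /\ forall n, elt N F' n -> v m n = p n.
Proof. by case: hv => _ [_ [_ []]]. Qed.

Lemma w_regular n : elt N F' n -> regular (w n).
Proof. by move=> /elt_Rall /w_point; apply: point_regular. Qed.

Definition wmin (s : seq (pt N)) (m : pt M) : RR := min_seq [seq w n m | n <- s].

Lemma wmin_regular s : (forall n, List.In n s -> elt N F' n) -> regular (wmin s).
Proof. by move=> sF'n; apply: regular_min_seq => n /sF'n; apply: w_regular. Qed.

Lemma wmin_le s m n : List.In n s -> wmin s m <= w n m.
Proof. by move=> sn; apply/min_seq_le/In_map. Qed.

Lemma wmin_attained s m : s <> [::] -> exists2 n, List.In n s & wmin s m = w n m.
Proof.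
move=> s0; have : [seq w n m | n <- s] <> [::] by case: s s0.
by move=> /min_seq_in /In_map_iff [n [nm sn]]; exists n.
Qed.

(* Transported through the duality, this is the point identity of [v m] on N_F'. *)
Lemma w_addc n1 n2 m : elt N F' n1 -> elt N F' n2 -> elt M Rall m ->
  min_seq [seq w (addc N a n1 n2) m | a <- enum (pl_idx N)] = w n1 m + w n2 m.
Proof.
move=> En1 En2; apply: (@regular_eq _ sF _ _
  (fun m => min_seq [seq w (addc N a n1 n2) m | a <- enum (pl_idx N)])
  (fun m => w n1 m + w n2 m) sF' FF') => [||m' Em'].
- by apply: regular_min_seq => a _; apply/w_regular/(addc_elt sF sF' FF').
- by apply: regularD; apply: w_regular.
- have [_ [vadd _]] := v_pointF Em'.
  rewrite -!vw // vadd // -minI_seq; congr min_seq; apply: List.map_ext_in => a _.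
  by rewrite vw //; apply: (addc_elt sF sF' FF').
Qed.

Lemma w_scale l n m : F l -> 0 <= l -> elt N F' n -> elt M Rall m ->
  w (scale N l n) m = l * w n m.
Proof.
move=> Fl l0 En.
have Eln : elt N F' (scale N l n) by apply: (scale_elt sF sF' FF') => //; apply: FF'.
apply: (@regular_eq _ sF _ _ (w (scale N l n)) (fun m => l * w n m) sF' FF') => [||m' Em'].
- exact: w_regular.
- exact/regularZ/w_regular.
- have [_ [_ vscale]] := v_pointF Em'.
  by rewrite -!vw // vscale //; apply: FF'.
Qed.

Lemma wmin_star s s' m : Svalid F' N (Some s) -> Svalid F' N (Some s') -> elt M Rall m ->
  min_seq [seq w n m | n <- flatten
    [seq [seq addc N a n1 n2 | a <- enum (pl_idx N)] | n1 <- s, n2 <- s']]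
  = wmin s m + wmin s' m.
Proof.
move=> [s0 sF'n] [s'0 s'F'n] Em; apply: min_seq_eq => [|_ /In_map_iff [n [<-]]].
  have [n1 sn1 ->] := wmin_attained m s0; have [n2 sn2 ->] := wmin_attained m s'0.
  rewrite -(w_addc (sF'n _ sn1) (s'F'n _ sn2) Em) minI_seq.
  have [a -> _] := minI_attained (fun a => w (addc N a n1 n2) m).
  apply/In_map/In_flatten; exists [seq addc N a n1 n2 | a <- enum (pl_idx N)].
  by split; [apply/In_allpairs; exists n1, n2 | apply/In_map/In_enum].
move=> /In_flatten [_ [/In_allpairs [n1 [n2 [sn1 s'n2 ->]]] /In_map_iff [a [<- _]]]].
apply: le_trans (_ : w n1 m + w n2 m <= _); first by apply: lerD; apply: wmin_le.
by rewrite -(w_addc (sF'n _ sn1) (s'F'n _ s'n2) Em) minI_seq bigmin_le.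
Qed.

Lemma pconv_self s n : List.In n s -> elt N F' n -> pconv F' N s n.
Proof. by move=> sn En; split=> // p a _ _; apply. Qed.

(* The points of N_F' are exactly the v m with m in M_F', so a point-convex hull is
   determined by the values of the functions w n on M_F'. *)
Lemma pconv_subP s s' : Svalid F' N (Some s) -> Svalid F' N (Some s') ->
  (forall n, pconv F' N s n -> pconv F' N s' n) <->
  (forall m, elt M F' m -> wmin s' m <= wmin s m).
Proof.
move=> [s0 sF'n] [s'0 s'F'n]; split=> [sub m Em | le_wmin n [En hull]].
  have [n sn ->] := wmin_attained m s0.
  have [_ hull'] := sub n (pconv_self sn (sF'n _ sn)).
  rewrite -(vw Em (sF'n _ sn)); apply: hull' => [||x s'x]; first exact: v_pointF.
    have [n' s'n' ->] := wmin_attained m s'0; rewrite -(vw Em (s'F'n _ s'n')).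
    exact: (v_pointF Em).1 _ (s'F'n _ s'n').
  by rewrite (vw Em (s'F'n _ s'x)) wmin_le.
split=> // p a pF' F'a ap; have [m [Em vp]] := v_onto pF'.
rewrite -(vp n En); apply: hull => [||x sx]; [exact: v_pointF | done |].
rewrite (vw Em (sF'n _ sx)); apply: (le_trans _ (wmin_le m sx)).
apply: (le_trans _ (le_wmin m Em)).
have [n' s'n' ->] := wmin_attained m s'0.
by rewrite -(vw Em (s'F'n _ s'n')) (vp _ (s'F'n _ s'n')); apply: ap.
Qed.

Lemma pconv_eqP s s' : Svalid F' N (Some s) -> Svalid F' N (Some s') ->
  setE (pconv F' N s) (pconv F' N s') <-> forall m, elt M F' m -> wmin s m = wmin s' m.
Proof.
move=> vs vs'; have sub := pconv_subP vs vs'; have sub' := pconv_subP vs' vs.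
split=> [e m Em | e n].
  apply/eqP; rewrite eq_le.
  by rewrite (proj1 sub' (fun n => proj2 (e n)) m Em) (proj1 sub (fun n => proj1 (e n)) m Em).
have le m : elt M F' m -> wmin s m <= wmin s' m by move=> Em; rewrite e.
have ge m : elt M F' m -> wmin s' m <= wmin s m by move=> Em; rewrite e.
by split; [apply: (proj2 sub ge) | apply: (proj2 sub' le)].
Qed.

Local Notation ext := (ext_map M N w).

Lemma ext_Seq x y : Svalid F' N x -> Svalid F' N y -> (Seq F' N x y <-> feq M (ext x) (ext y)).
Proof.
have E0 := pinv_eltR sF (pl_idx0 M) 0.
case: x y => [s|] [s'|] //= vs vs'; last 2 first.
- by split=> // /(_ _ E0).
- by split=> // /(_ _ E0).
rewrite pconv_eqP //; split=> [e m Em | e m Em]; last by case: (e m (elt_Rall Em)).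
congr Some; case: vs => _ sF'n; case: vs' => _ s'F'n.
apply: (@regular_eq _ sF _ _ (wmin s) (wmin s') sF' FF') Em.
- exact: wmin_regular sF'n.
- exact: wmin_regular s'F'n.
- exact: e.
Qed.

Lemma Svalid_oplus x y : Svalid F' N x -> Svalid F' N y -> Svalid F' N (Soplus N x y).
Proof.
case: x y => [s|] [s'|] // [s0 sF'n] [_ s'F'n]; split; first by case: s s0 sF'n.
by move=> n /In_cat [sn|s'n]; [apply: sF'n | apply: s'F'n].
Qed.

Lemma Svalid_star x y : Svalid F' N x -> Svalid F' N y -> Svalid F' N (Sstar N x y).
Proof.
case: x y => [s|] [s'|] // [s0 sF'n] [s'0 s'F'n]; split.
  case: s s0 {sF'n} => // n1 s _; case: s' s'0 {s'F'n} => // n2 s' _ /=.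
  by have := In_enum (pl_idx0 N); case: (enum (pl_idx N)).
move=> _ /In_flatten [_ [/In_allpairs [n1 [n2 [sn1 s'n2 ->]]] /In_map_iff [a [<- _]]]].
by apply: (addc_elt sF sF' FF'); [apply: sF'n | apply: s'F'n].
Qed.

Lemma Svalid_scale l x : F l -> Svalid F' N x -> Svalid F' N (Sscale N l x).
Proof.
case: x => [s|] // Fl [s0 sF'n]; split; first by case: s s0 {sF'n}.
move=> _ /In_map_iff [n [<- sn]].
by apply: (scale_elt sF sF' FF'); [apply: FF' | apply: sF'n].
Qed.

Lemma ext_oplus x y : Svalid F' N x -> Svalid F' N y ->
  feq M (ext (Soplus N x y)) (fun m => tmin (ext x m) (ext y m)).
Proof.
case: x y => [s|] [s'|] // [s0 _] [s'0 _] m _.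
by rewrite /= map_cat min_seq_cat //; [case: s s0 | case: s' s'0].
Qed.

Lemma ext_star x y : Svalid F' N x -> Svalid F' N y ->
  feq M (ext (Sstar N x y)) (fun m => tadd (ext x m) (ext y m)).
Proof. by case: x y => [s|] [s'|] // vs vs' m Em; rewrite /= wmin_star. Qed.

Lemma ext_scale l x : F l -> 0 <= l -> Svalid F' N x ->
  feq M (ext (Sscale N l x)) (fun m => tscale l (ext x m)).
Proof.
case: x => [s|] // Fl l0 [_ sF'n] m Em /=; rewrite -map_comp -min_seq_scale // -map_comp.
congr (Some (min_seq _)); apply: List.map_ext_in => n sn /=.
by rewrite (w_scale Fl l0 (sF'n _ sn) Em).
Qed.

Lemma Pgen_w n : elt N F' n -> Pgen F' M (fun m => Some (w n m)).
Proof. by move=> En; apply: Pg_point; [apply/w_point/(elt_Rall En) | apply: w_pointF]. Qed.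

Lemma ext_Pgen x : Svalid F' N x -> Pgen F' M (ext x).
Proof.
case: x => [[|n t] [_ sF'n]|_] //; last exact: Pg_inf.
elim: t n sF'n => [|n2 t ih] n sF'n; first by apply/Pgen_w/sF'n; left.
change (Pgen F' M (fun m => tmin (Some (w n2 m)) (ext (Some (n :: t)) m))).
apply: Pg_min; first by apply/Pgen_w/sF'n; right; left.
by apply: ih => x [<-|tx]; apply: sF'n; [left | right; right].
Qed.

Lemma ext_onto f : Pgen F' M f -> exists x, Svalid F' N x /\ feq M (ext x) f.
Proof.
elim=> [p pR pF'|
        |f1 g1 _ [x [vx fx]] _ [y [vy gy]]
        |f1 g1 _ [x [vx fx]] _ [y [vy gy]]
        |l f1 Fl l0 _ [x [vx fx]]].
- have [n [En np]] := w_onto pF'; exists (Some [:: n]); split; first by split=> // n' [<-|].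
  move=> m Em; congr Some; apply: (@regular_eq _ sF _ _ (w n) p sF' FF') Em => //.
  + exact: w_regular.
  + exact: point_regular.
- by exists None.
- exists (Soplus N x y); split; first exact: Svalid_oplus.
  by move=> m Em; rewrite ext_oplus // fx // gy.
- exists (Sstar N x y); split; first exact: Svalid_star.
  by move=> m Em; rewrite ext_star // fx // gy.
- exists (Sscale N l x); split; first exact: Svalid_scale.
  by move=> m Em; rewrite ext_scale // fx.
Qed.

Lemma ext_semialg_iso : semialg_iso F' M N ext.
Proof.
split; first exact: ext_Seq.
split; first exact: ext_Pgen.
split; first exact: ext_onto.
split; first exact: ext_oplus.
split; first exact: ext_star.
by split; first exact: ext_scale.
Qed.

End DualPair.

Theorem mainTheorem8 (F F' : RR -> Prop) (M N : PL F)
  (v : pt M -> pt N -> RR) (w : pt N -> pt M -> RR) :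
  is_subring F -> is_subring F' -> (forall x, F x -> F' x) ->
  strict_dual_pair F' M N v w ->
  semialg_iso F' M N (ext_map M N w) /\ semialg_iso F' N M (ext_map N M v).
Proof.
move=> sF sF' FF' [hv [hw vw]]; split.
  exact: (ext_semialg_iso sF sF' FF' hv hw vw).
exact: (ext_semialg_iso sF sF' FF' hw hv (fun n m En Em => esym (vw m n Em En))).
Qed.
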